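(* Let $\Omega$ be a finite set, $(H_i\mid i\in\Omega)$ finite abelian groups, $h_i=|H_i|$, $\mathbf{H}=\prod_{i\in\Omega}H_i$, and $\mathbf{P}=(\Omega,\preccurlyeq_{\mathbf{P}})$ a poset. Let $\alpha\in\hat{\mathbf{H}}$ with $\langle\mathrm{supp}(\alpha)\rangle_{\overline{\mathbf{P}}}=D$. Then $$F(\alpha)=\sum_{I\in\mathcal{I}(\mathbf{P}),\ I\subseteq(\Omega-D)\cup\min_{\mathbf{P}}(D)}(-1)^{|I\cap D|}\Big(\prod_{i\in I-\max_{\mathbf{P}}(I)}h_i\Big)\Big(\prod_{i\in\max_{\mathbf{P}}(I)-\min_{\mathbf{P}}(D)}(h_i-1)\Big)x^{|I|}.$$
   Context: $\hat{\mathbf{H}}$ is the character group of $\mathbf{H}$, identified with $\prod_i\hat{H_i}$ via $\alpha(\beta)=\prod_i\alpha_{(i)}(\beta_{(i)})$; $\mathrm{supp}$ of a codeword is the set of coordinates where it is not the identity. $\mathcal{I}(\mathbf{P})$ is the set of ideals (down-closed subsets) of $\mathbf{P}$; $\max_{\mathbf{P}}(B)$, $\min_{\mathbf{P}}(B)$ are the sets of maximal, minimal elements of $B$ w.r.t. $\preccurlyeq_{\mathbf{P}}$. For a poset $\mathbf{Q}$ on $\Omega$, $\langle B\rangle_{\mathbf{Q}}$ is the down-closure of $B$ in $\mathbf{Q}$, $\mathrm{wt}_{\mathbf{Q}}(\beta)=|\langle\mathrm{supp}(\beta)\rangle_{\mathbf{Q}}|$. $\overline{\mathbf{P}}$ is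 the dual poset. With $n=|\Omega|$, $F(\alpha)=\sum_{l=0}^{n}\big(\sum_{\beta\in\mathbf{H},\ \mathrm{wt}_{\mathbf{P}}(\beta)=l}\alpha(\beta)\big)x^l$. *)

From HB Require Import structures.
From mathcomp Require Import all_boot all_order all_algebra all_field.
Set Implicit Arguments. Unset Strict Implicit. Unset Printing Implicit Defensive.
Import Order.Theory GRing.Theory Num.Theory.
Local Open Scope ring_scope.
Local Open Scope order_scope.

Definition is_character (G : finZmodType) (f : G -> algC) : Prop :=
  f 0%R = 1%R /\ forall x y : G, f (x + y)%R = (f x * f y)%R.

Section PosetDefs.
Context {d : Order.disp_t} {T : finPOrderType d}.

Definition down_closure (B : {set T}) : {set T} :=
  [set j | [exists i in B, j <= i]].
(* down-closure in the dual poset = up-closure in P *)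
Definition dual_closure (B : {set T}) : {set T} :=
  [set j | [exists i in B, i <= j]].
Definition is_ideal (I : {set T}) : bool :=
  [forall i in I, forall j, (j <= i) ==> (j \in I)].
Definition maxP (B : {set T}) : {set T} :=
  [set i in B | [forall j in B, (i <= j) ==> (j == i)]].
Definition minP (B : {set T}) : {set T} :=
  [set i in B | [forall j in B, (j <= i) ==> (j == i)]].
End PosetDefs.

Section Codes.
Context {d : Order.disp_t} {T : finPOrderType d} (H : T -> finZmodType).

Definition supp_word (beta : {dffun forall i, H i}) : {set T} :=
  [set i | beta i != 0%R].
Definition wtP (beta : {dffun forall i, H i}) : nat :=
  #|down_closure (supp_word beta)|.
Definition supp_char (alpha : forall i, H i -> algC) : {set T} :=
  [set i | [exists x : H i, alpha i x != 1%R]].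
Definition char_eval (alpha : forall i, H i -> algC) (beta : {dffun forall i, H i}) : algC :=
  (\prod_i alpha i (beta i))%R.
Definition Fpoly (alpha : forall i, H i -> algC) : {poly algC} :=
  (\sum_(l < #|T|.+1)
     (\sum_(beta : {dffun forall i, H i} | wtP beta == l) char_eval alpha beta) *: 'X^l)%R.
End Codes.

From HB Require Import structures.
From mathcomp Require Import all_boot all_order all_algebra all_field.
Import Order.Theory GRing.Theory Num.Theory.
Set Implicit Arguments. Unset Strict Implicit. Unset Printing Implicit Defensive.

(* Group the words beta by the ideal <supp beta>_P they generate.  A word
   generates the ideal I exactly when its support lies in I and contains
   max_P(I), so the sum of alpha(beta) over these words factors over the
   coordinates: a coordinate outside I contributes alpha_i(0) = 1, one in
   I - max_P(I) the character sum of alpha_i, which is h_i or 0, and one in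
   max_P(I) that sum minus 1.  The product vanishes unless every point of I
   in D is both minimal in D and maximal in I, and then it is the signed
   product of the statement. *)

Section PosetIdeals.
Local Open Scope order_scope.
Context {d : Order.disp_t} {T : finPOrderType d}.
Implicit Types (B I S : {set T}) (i j : T).

Lemma ideal_down I i j : is_ideal I -> i \in I -> j <= i -> j \in I.
Proof. by move=> /forallP /(_ i) + iI; rewrite iI => /forallP /(_ j) /implyP. Qed.

Lemma maxP_sub I : maxP I \subset I.
Proof. by apply/subsetP => i; rewrite inE => /andP[]. Qed.

Lemma minP_sub B : minP B \subset B.
Proof. by apply/subsetP => i; rewrite inE => /andP[]. Qed.

(* A point of I above j with the largest principal ideal is maximal in I. *)
Lemma exists_maxP I j : j \in I -> exists2 m, m \in maxP I & j <= m.
Proof.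
move=> jI; pose above m := (m \in I) && (j <= m).
have jA : above j by rewrite /above jI lexx.
case: (@arg_maxnP _ j above (fun m => #|[set k | k <= m]|) jA) => x /andP[xI jx] xmax.
exists x => //; rewrite inE xI; apply/forallP => l; apply/implyP => lI; apply/implyP => xl.
apply/negPn/negP => lx; have ltxl : x < l by rewrite lt_def lx xl.
have: (#|[set k | (k <= x)%O]| < #|[set k | (k <= l)%O]|)%N.
  apply: proper_card; apply/properP; split.
    by apply/subsetP => k; rewrite !inE => /le_trans; apply.
  by exists l; rewrite !inE ?lexx ?lt_geF.
by rewrite ltnNge => /negP; apply; apply: xmax; rewrite /above lI (le_trans jx xl).
Qed.

Lemma down_closure_ideal B : is_ideal (down_closure B).
Proof.
apply/forallP => i; apply/implyP; rewrite inE => /existsP[k /andP[kB ik]].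
apply/forallP => j; apply/implyP => ji; rewrite inE; apply/existsP; exists k.
by rewrite kB (le_trans ji ik).
Qed.

Lemma sub_down_closure B : B \subset down_closure B.
Proof. by apply/subsetP => i iB; rewrite inE; apply/existsP; exists i; rewrite iB lexx. Qed.

Lemma sub_dual_closure B : B \subset dual_closure B.
Proof. by apply/subsetP => i iB; rewrite inE; apply/existsP; exists i; rewrite iB lexx. Qed.

Lemma down_closure_eq_ideal I B : is_ideal I ->
  (down_closure B == I) = (B \subset I) && (maxP I \subset B).
Proof.
move=> idI; apply/idP/andP.
  move/eqP <-; split; first exact: sub_down_closure.
  apply/subsetP => i; rewrite inE => /andP[]; rewrite inE => /existsP[k /andP[kB ik]].
  move=> /forallP /(_ k); rewrite (subsetP (sub_down_closure B)) //= ik /=.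
  by move=> /eqP <-.
move=> [sBI sMB]; apply/eqP/setP => j; rewrite inE; apply/existsP/idP.
  by move=> [k /andP[kB jk]]; apply: ideal_down idI (subsetP sBI _ kB) jk.
by move=> /exists_maxP[m mM jm]; exists m; rewrite (subsetP sMB _ mM) jm.
Qed.

Lemma minP_dual_closure_sub S : minP (dual_closure S) \subset S.
Proof.
apply/subsetP => i; rewrite inE => /andP[]; rewrite inE => /existsP[s /andP[sS si]].
by move=> /forallP /(_ s); rewrite (subsetP (sub_dual_closure S)) //= si => /eqP <-.
Qed.

Lemma up_closed_dual_closure S i j : i \in dual_closure S -> i <= j -> j \in dual_closure S.
Proof.
rewrite !inE => /existsP[s /andP[sS si]] ij.
by apply/existsP; exists s; rewrite sS (le_trans si ij).
Qed.

Section IdealMeetsDualClosure.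
Variables S I : {set T}.
Hypothesis idI : is_ideal I.
Local Notation D := (dual_closure S).

Lemma ideal_meet_dual_closure_sub : I \subset ~: D :|: minP D ->
  I :&: D \subset maxP I :&: minP D.
Proof.
move=> /subsetP sIDc; have minD i : i \in I -> i \in D -> i \in minP D.
  by move=> iI iD; move: (sIDc i iI); rewrite in_setU in_setC iD.
apply/subsetP => i; rewrite inE => /andP[iI iD]; rewrite inE minD // andbT.
rewrite inE iI; apply/forallP => j; apply/implyP => jI; apply/implyP => ij.
have jD := up_closed_dual_closure iD ij.
by move: (minD j jI jD); rewrite inE => /andP[_ /forallP /(_ i)]; rewrite iD ij eq_sym.
Qed.

Lemma ideal_not_sub_dual_closure : ~~ (I \subset ~: D :|: minP D) ->
  exists2 s, s \in S & s \in I :\: maxP I.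
Proof.
move=> /subsetPn[i iI]; rewrite in_setU in_setC negb_or negbK => /andP[iD].
rewrite inE iD negb_forall => /existsP[k]; rewrite !negb_imply => /and3P[kD ki nki].
move: kD; rewrite inE => /existsP[s /andP[sS sk]]; exists s => //.
have si := le_trans sk ki; rewrite inE (ideal_down idI iI si) andbT.
apply/negP; rewrite inE => /andP[_ /forallP /(_ i)]; rewrite iI si /= => /eqP eis.
have eki : k = i by apply: le_anti; rewrite ki eis sk.
by rewrite eki eqxx in nki.
Qed.

Local Open Scope ring_scope.

(* The i-th factor is the value at i computed in sum_char_eval_supp_eq, with
   [h i] the order of the i-th group. *)
Lemma prod_ideal_factors (R : comNzRingType) (h : T -> R) :
  \prod_i (if i \in maxP I then (if i \in S then 0 else h i) - 1
           else if i \in I then (if i \in S then 0 else h i) else 1)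
  = if I \subset ~: D :|: minP D then
      (-1) ^+ #|I :&: D| * \prod_(i in I :\: maxP I) h i
      * \prod_(i in maxP I :\: minP D) (h i - 1)
    else 0.
Proof.
have SD := subsetP (sub_dual_closure S).
case: ifP => [sIDc | /negbT /ideal_not_sub_dual_closure[s sS]]; last first.
  by rewrite inE => /andP[/negbTE sM sI]; rewrite (bigD1 s) //= sM sI sS mul0r.
have /subsetP IDsub := ideal_meet_dual_closure_sub sIDc.
rewrite -prodr_const !(big_mkcond (fun i => i \in _)) -!big_split /=.
apply: eq_bigr => i _; rewrite !in_setD !in_setI.
case iM: (i \in maxP I).
  have iI := subsetP (maxP_sub I) _ iM; rewrite iI /=.
  case iD: (i \in D).
    have /setIP[_ imin] : i \in maxP I :&: minP D by apply: IDsub; rewrite inE iI iD.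
    by rewrite imin (subsetP (minP_dual_closure_sub S) _ imin) sub0r !mulr1.
  have -> : (i \in minP D) = false by apply: contraFF iD => /(subsetP (minP_sub _)).
  by rewrite (contraFF (SD i) iD) !mul1r.
case iI: (i \in I) => /=; last by rewrite andbF !mulr1.
have iD : (i \in D) = false.
  apply: contraFF iM => iD.
  by have /setIP[] : i \in maxP I :&: minP D by apply: IDsub; rewrite inE iI iD.
by rewrite (contraFF (SD i) iD) iD andbF mul1r mulr1.
Qed.

End IdealMeetsDualClosure.
End PosetIdeals.

Section CharacterSums.
Local Open Scope ring_scope.
Variables (G : finZmodType) (f : G -> algC).
Hypothesis f_char : is_character f.

Lemma sum_character : \sum_x f x = if [exists x, f x != 1] then 0 else #|G|%:R.
Proof.
case: f_char => _ fD; case: ifP => [/existsP[x0 fx0] | /negbT].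
  (* translating by x0 multiplies the sum by f x0 != 1 *)
  have: \sum_x f x = f x0 * \sum_x f x.
    by rewrite {1}(reindex_inj (addrI x0)) mulr_sumr; apply: eq_bigr => x _; rewrite fD.
  move/eqP; rewrite -subr_eq0 -{1}[\sum_x f x]mul1r -mulrBl mulf_eq0 subr_eq0.
  by rewrite eq_sym (negbTE fx0) => /eqP.
rewrite negb_exists => /forallP f1.
by rewrite (eq_bigr (fun _ => 1)) ?sumr_const // => x _; apply/eqP; rewrite -[_ == _]negbK f1.
Qed.

End CharacterSums.

Section DffunDistr.
Local Open Scope ring_scope.
Variables (I : finType) (T_ : I -> finType) (R : comNzRingType).

Lemma sum_dffun_prod (F : forall i, T_ i -> R) :
  \sum_(f : {dffun forall i, T_ i}) \prod_i F i (f i) = \prod_i \sum_(x : T_ i) F i x.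
Proof.
rewrite (reindex (@dffun_of_fprod I T_)); last exact: onW_bij (dffun_of_fprod_bij T_).
pose P i := [ffun x => F i x].
transitivity (\sum_(t : fprod T_) \prod_(i in I) P i (t i)).
  by apply: eq_bigr => t _; apply: eq_bigr => i _; rewrite !ffunE.
rewrite big_fprod.
transitivity (\prod_i \sum_(j in tagged_with T_ i) untag 0 (P i) j).
  by rewrite bigA_distr_big_dep.
apply: eq_bigr => i _; transitivity (\sum_(x : T_ i) P i x).
  by rewrite (big_tag (fun i x => P i x)).
by apply: eq_bigr => x _; rewrite ffunE.
Qed.

Lemma sum_dffun_prod_cond (P : forall i, pred (T_ i)) (F : forall i, T_ i -> R) :
  \sum_(f : {dffun forall i, T_ i} | [forall i, P i (f i)]) \prod_i F i (f i)
  = \prod_i \sum_(x | P i x) F i x.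
Proof.
under [RHS]eq_bigr do rewrite big_mkcond; rewrite -sum_dffun_prod big_mkcond.
apply: eq_bigr => f _; case: (boolP [forall i, _]) => [/forallP Pf | ].
  by apply: eq_bigr => i _; rewrite Pf.
by rewrite negb_forall => /existsP[i /negbTE nPi]; rewrite (bigD1 i) //= nPi mul0r.
Qed.

End DffunDistr.

Unset Implicit Arguments.
Set Strict Implicit.

Section WeightEnumerator.
Local Open Scope ring_scope.
Context {d : Order.disp_t} {T : finPOrderType d} (H : T -> finZmodType).
Variable alpha : forall i, H i -> algC.

Lemma Fpoly_ideal_expansion :
  Fpoly alpha = \sum_(I | is_ideal I)
    (\sum_(b | down_closure (supp_word b) == I) char_eval alpha b) *: 'X^#|I|.
Proof.
have -> : Fpoly alpha = \sum_(b : {dffun forall i, H i}) char_eval alpha b *: 'X^(wtP b).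
  rewrite /Fpoly (partition_big (fun b => inord (wtP b) : 'I_#|T|.+1) predT) //=.
  apply: eq_bigr => l _; rewrite scaler_suml; apply: eq_big => [b | b /eqP <- //].
  by rewrite -val_eqE /= inordK // ltnS max_card.
rewrite (partition_big (fun b => down_closure (supp_word b)) predT) //= [RHS]big_mkcond.
apply: eq_bigr => I _; rewrite scaler_suml; case: ifP => [_ | nI].
  by apply: eq_bigr => b /eqP <-.
rewrite big_pred0 // => b; apply: contraFF nI => /eqP <-; exact: down_closure_ideal.
Qed.

Lemma down_closure_supp_eq I (b : {dffun forall i, H i}) : is_ideal I ->
  (down_closure (supp_word b) == I)
  = [forall i, if i \in maxP I then b i != 0 else (i \in I) || (b i == 0)].
Proof.
move=> idI; rewrite down_closure_eq_ideal //; apply/andP/forallP.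
  move=> [/subsetP sI /subsetP Ms] i; case: ifP => [/Ms | iM]; first by rewrite inE.
  by case: (boolP (b i == 0)); rewrite ?orbT // orbF => bi; apply: sI; rewrite inE.
move=> bP; split; apply/subsetP => i.
  by rewrite inE; move: (bP i); case: ifP => [/(subsetP (maxP_sub I)) | _ /orP[// | ->]].
by move=> iM; move: (bP i); rewrite iM inE.
Qed.

Hypothesis alpha0 : forall i, alpha i 0 = 1.

Lemma sum_char_eval_supp_eq I : is_ideal I ->
  \sum_(b | down_closure (supp_word b) == I) char_eval alpha b
  = \prod_i (if i \in maxP I then \sum_x alpha i x - 1
             else if i \in I then \sum_x alpha i x else 1).
Proof.
move=> idI; rewrite (eq_bigl _ _ (fun b => down_closure_supp_eq I b idI)).
pose P i (x : H i) := if i \in maxP I then x != 0 else (i \in I) || (x == 0).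
rewrite (sum_dffun_prod_cond P alpha); apply: eq_bigr => i _; rewrite /P.
case: ifP => _; first by rewrite [X in _ = X - _](bigD1 0) //= alpha0 addrC addrK.
by case: (i \in I); rewrite ?big_pred1_eq ?alpha0.
Qed.

End WeightEnumerator.

Theorem theorem2p1 (d : Order.disp_t) (Omega : finPOrderType d)
  (H : Omega -> finZmodType) (alpha : forall i, H i -> algC)
  (halpha : forall i, is_character (alpha i)) (D : {set Omega})
  (hD : dual_closure (supp_char alpha) = D) :
  Fpoly alpha =
  (\sum_(I : {set Omega} | is_ideal I && (I \subset (~: D) :|: minP D))
     ((-1) ^+ #|I :&: D|
      * (\prod_(i in I :\: maxP I) (#|H i|%:R : algC))
      * (\prod_(i in maxP I :\: minP D) ((#|H i|%:R : algC) - 1)))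
     *: 'X^#|I|)%R.
Proof.
subst D; rewrite Fpoly_ideal_expansion big_mkcondr; apply: eq_bigr => I idI.
have alpha0 i : alpha i 0%R = 1%R by case: (halpha i).
have sum_alpha i : (\sum_x alpha i x = if i \in supp_char alpha then 0 else #|H i|%:R)%R.
  by rewrite sum_character // inE.
rewrite sum_char_eval_supp_eq //; under eq_bigr do rewrite !sum_alpha.
by rewrite prod_ideal_factors //; case: ifP; rewrite ?scale0r.
Qed.
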